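(* For any finite graph $G$, if the VC-dimension of $\mathcal{B}(G)$ is at least $3$, then the VC-dimension of $\mathcal{B}(G)$ is at most $\nu_{\mathrm{bi}}(G)$.
   Context: $\mathrm{MIS}(G)$ is the set of maximal independent sets of $G$; $\mathcal{B}(G)=\{K_v: v\in V(G)\}$ with $K_v=\{I\in\mathrm{MIS}(G): v\in I\}$, a set system on ground set $\mathrm{MIS}(G)$. The VC-dimension of a set system $\mathcal{F}$ on ground set $X$ is the largest $d$ such that some $S\subseteq X$ with $|S|=d$ satisfies: for every $B\subseteq S$ there is $A\in\mathcal{F}$ with $A\cap S=B$. $\nu_{\mathrm{bi}}(G)$ is the largest $t$ such that $G$ has $2t$ distinct vertices $u_1,\dots,u_t,v_1,\dots,v_t$ with $u_iv_j\in E(G)$ iff $i=j$. *)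

From mathcomp Require Import all_boot.
Set Implicit Arguments. Unset Strict Implicit. Unset Printing Implicit Defensive.

Definition simple_graph (T : finType) (e : rel T) : Prop :=
  symmetric e /\ irreflexive e.

Section Defs.
Variables (T : finType) (e : rel T).

Definition independent (I : {set T}) : bool :=
  [forall x in I, forall y in I, ~~ e x y].

Definition MIS : {set {set T}} :=
  [set I | independent I &&
           [forall J : {set T}, (independent J && (I \subset J)) ==> (J == I)]].

Definition Kv (v : T) : {set {set T}} := [set I in MIS | v \in I].

(* the set system B(G) = { K_v : v in V(G) } on ground set MIS(G) *)
Definition Bsys : {set {set {set T}}} := [set Kv v | v in T].

Definition shattered (F : {set {set {set T}}}) (S : {set {set T}}) : bool :=
  (S \subset MIS) &&
  [forall B : {set {set T}}, (B \subset S) ==> [exists A in F, A :&: S == B]].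

(* VC-dimension: largest size of a shattered subset of the ground set
   (0 if none exists). *)
Definition vcdim (F : {set {set {set T}}}) : nat :=
  \max_(S : {set {set T}} | shattered F S) #|S|.

Definition has_bi (t : nat) : bool :=
  [exists u : {ffun 'I_t -> T}, exists v : {ffun 'I_t -> T},
     [&& injectiveb u, injectiveb v,
         [forall i, forall j, u i != v j] &
         [forall i, forall j, e (u i) (v j) == (i == j)]]].

(* nu_bi(G); such t satisfy 2t <= |V(G)|, so the max is over t <= |V(G)| *)
Definition nu_bi : nat := \max_(t < #|T|.+1 | has_bi t) t.

End Defs.

(* Let S = {I_1, ..., I_n} be a shattered family of maximal independent sets.
   Shattering S \ {I_i} yields a vertex v_i lying in every I_j except I_i, and
   maximality of I_i yields a neighbour u_i of v_i inside I_i. Independence of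
   the I_j makes u_i v_j a non-edge for i <> j, so the pairs (u_i, v_i) form an
   induced matching of size n. The u_i and v_j are distinct because, for
   n >= 3, some third set I_k contains v_j but not u_i. *)
From mathcomp Require Import all_boot.

Set Implicit Arguments.
Unset Strict Implicit.
Unset Printing Implicit Defensive.

Section MaximalIndependentSets.
Variables (T : finType) (e : rel T).

Lemma vcdim_attained (F : {set {set {set T}}}) :
  0 < vcdim e F -> exists2 S, shattered e F S & #|S| = vcdim e F.
Proof.
rewrite /vcdim; case: (pickP (shattered e F)) => [S0 shS0 _ | none].
  rewrite (bigmax_eq_arg _ shS0).
  by case: arg_maxnP => // S shS _; exists S.
by rewrite big_pred0.
Qed.

Lemma independentP (I : {set T}) :
  reflect {in I &, forall x y, ~~ e x y} (independent e I).
Proof.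
apply: (iffP forall_inP) => [indI x y xI yI | nadjI x xI].
  exact: (forall_inP (indI x xI)).
by apply/forall_inP => y yI; apply: nadjI.
Qed.

Lemma MIS_independent (I : {set T}) : I \in MIS e -> independent e I.
Proof. by rewrite inE => /andP[]. Qed.

Lemma MIS_dominating (I : {set T}) (v : T) :
  simple_graph e -> I \in MIS e -> v \notin I -> exists2 w, w \in I & e w v.
Proof.
case=> sym irr; rewrite inE => /andP[indI /forallP maxI] vI.
have [/existsP[w /andP[wI ewv]] | no_nb] := boolP [exists w, (w \in I) && e w v].
  by exists w.
have nadj x : x \in I -> ~~ e x v.
  by move=> xI; apply: contra no_nb => exv; apply/existsP; exists x; rewrite xI.
have indvI : independent e (v |: I).
  apply/independentP => x y; rewrite !in_setU1.
  case/predU1P=> [-> | xI]; case/predU1P=> [-> | yI].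
  - by rewrite irr.
  - by rewrite sym nadj.
  - exact: nadj.
  - exact: (independentP _ indI).
move: (maxI (v |: I)); rewrite indvI subsetUr /= => /eqP vII.
by move: vI; rewrite -vII setU11.
Qed.

Lemma shattered_private_vertex (S : {set {set T}}) (I : {set T}) :
  shattered e (Bsys e) S -> I \in S ->
  exists2 v, v \notin I & {in S :\ I, forall J : {set T}, v \in J}.
Proof.
case/andP=> SM /forallP shS IS.
have := shS (S :\ I); rewrite subD1set => /existsP[_ /andP[/imsetP[v _ ->]]].
move=> /eqP KvS; exists v => [|J JSI].
  apply: contraT; rewrite negbK => vI.
  have : I \in Kv e v :&: S by rewrite inE IS andbT /Kv inE (subsetP SM I IS).
  by rewrite KvS !inE eqxx.
by move: JSI; rewrite -KvS !inE => /andP[/andP[_ ->]].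
Qed.

Lemma has_bi_le_card (t : nat) : has_bi e t -> t <= #|T|.
Proof.
case/existsP=> u /existsP[_ /and4P[/injectiveP injU _ _ _]].
by rewrite -[t]card_ord; apply: leq_card injU.
Qed.

Lemma leq_nu_bi (t : nat) : has_bi e t -> t <= nu_bi e.
Proof.
move=> bi_t; have t_le : t < #|T|.+1 by rewrite ltnS has_bi_le_card.
exact: (@leq_bigmax_cond _ (fun s : 'I_#|T|.+1 => has_bi e s) val (Ordinal t_le)).
Qed.

Lemma has_bi_of_separated_independent (n : nat) (I : 'I_n -> {set T})
    (u v : 'I_n -> T) :
  2 < n -> (forall i, independent e (I i)) ->
  (forall i, u i \in I i) -> (forall i, e (u i) (v i)) ->
  (forall i j, (v i \in I j) = (i != j)) ->
  has_bi e n.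
Proof.
move=> n_gt2 indI uI euv vI.
have uIE i j : (u i \in I j) = (i == j).
  have [<- | ij] := eqVneq i j; first exact: uI.
  apply/negbTE/negP => uIj.
  have vIj : v i \in I j by rewrite vI.
  by move: (independentP _ (indI j) _ _ uIj vIj); rewrite euv.
have uv_neq i j : u i != v j.
  have [k] : exists k, k \in ~: [set i; j].
    apply/set0Pn; rewrite -card_gt0 -(ltn_add2l #|[set i; j]|) addn0 cardsC.
    by rewrite card_ord (leq_ltn_trans _ n_gt2) // cards2 ltnS leq_b1.
  rewrite !inE negb_or => /andP[ki kj].
  have vjk : v j \in I k by rewrite vI eq_sym.
  by apply: contraTneq vjk => <-; rewrite uIE eq_sym.
apply/existsP; exists (finfun u); apply/existsP; exists (finfun v).
apply/and4P; split.
- apply/injectiveP => i j; rewrite !ffunE => uij.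
  by apply/eqP; rewrite -(uIE i j) uij uI.
- apply/injectiveP => i j; rewrite !ffunE => vij.
  by apply/eqP/negbNE; rewrite -(vI i j) vij vI eqxx.
- by apply/forallP => i; apply/forallP => j; rewrite !ffunE uv_neq.
- apply/forallP => i; apply/forallP => j; rewrite !ffunE.
  have [<- | ij] := eqVneq i j; first by rewrite euv.
  by apply/eqP/negbTE/(independentP _ (indI i)); rewrite ?uI // vI eq_sym.
Qed.

End MaximalIndependentSets.

Theorem lemma2p13 (T : finType) (e : rel T) :
  simple_graph e ->
  3 <= vcdim e (Bsys e) ->
  vcdim e (Bsys e) <= nu_bi e.
Proof.
move=> sg vc_ge3.
have [S shS cardS] := vcdim_attained (ltnW (ltnW vc_ge3)).
rewrite -cardS in vc_ge3 *; apply: leq_nu_bi.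
pose I i : {set T} := enum_val (i : 'I_#|S|).
have IS i : I i \in S by apply: enum_valP.
have IM i : I i \in MIS e by apply: subsetP (proj1 (andP shS)) _ (IS i).
have private_vertex i : exists2 w, w \notin I i & {in S :\ I i, forall J : {set T}, w \in J}.
  exact: shattered_private_vertex shS (IS i).
have [v vNI vI] := fin_all_exists2 private_vertex.
have neighbour i : exists2 w, w \in I i & e w (v i).
  exact: MIS_dominating sg (IM i) (vNI i).
have [u uI euv] := fin_all_exists2 neighbour.
apply: (has_bi_of_separated_independent (I := I) (u := u) (v := v)) => // i.
- exact: MIS_independent.
- move=> j; have [<- | ij] := eqVneq i j; first exact: negbTE (vNI i).
  by apply: vI; rewrite !inE IS (inj_eq enum_val_inj) eq_sym ij.
Qed.
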